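(* Consider a one-red TAP instance with $n$ blue features, and let $\mathrm{OPT}_{SC}$ be the smallest number of red features appearing in a set of exemplars in which all blue features appear. Let $K=\lceil \tfrac12(n-\mathrm{OPT}_{SC})\rceil$. Then GREEDY covers at least $2K$ blue features in its first $K$ moves (iterations).
   Context: Target Approximation Problem (TAP): the input is a groundset $U$ of features, a target $T\subseteq U$, and a collection $S$ of exemplars, each a subset of $U$. Features in $U\cap T$ are blue, features in $U\setminus T$ are red. A feature appears in $S'\subseteq S$ if it lies in $\bigcup_{E\in S'}E$. It is assumed that every feature appears in at least one exemplar and that $T$ and all exemplars are nonempty. An instance is one-red if every exemplar contains exactly one red feature. A red feature $r$ covers a blue feature $b$ if some exemplar contains both. GREEDY: until every blue feature is covered, repeatedly choose the red feature that covers the largest number of not-yet-covered blue features (ties broken arbitrarily); each such choice is one move, and the blue features covered by that move are the previously uncovered blue features covered by the chosen red feature. *)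

From mathcomp Require Import all_boot.
Set Implicit Arguments. Unset Strict Implicit. Unset Printing Implicit Defensive.

(* TAP instance: groundset = finite type U, target T : {set U},
   exemplars S : {set {set U}}.  Blue = in T, red = not in T. *)

Definition tap_wf (U : finType) (T : {set U}) (S : {set {set U}}) : Prop :=
  [/\ forall u : U, exists2 E, E \in S & u \in E,
      T != set0 &
      forall E, E \in S -> E != set0].

Definition one_red (U : finType) (T : {set U}) (S : {set {set U}}) : Prop :=
  forall E, E \in S -> #|E :\: T| = 1.

Definition covers (U : finType) (S : {set {set U}}) (r b : U) : bool :=
  [exists E in S, (r \in E) && (b \in E)].

(* OPT_SC: smallest number of red features appearing in a set of exemplars
   S' ⊆ S in which all blue features appear.  (S itself is feasible and every
   cost is <= #|U|, so #|U| is a harmless initial value for the min.) *)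
Definition opt_sc (U : finType) (T : {set U}) (S : {set {set U}}) : nat :=
  \big[minn/#|U|]_(S' in powerset S | T \subset cover S') #|cover S' :\: T|.

Definition covered (U : finType) (T : {set U}) (S : {set {set U}})
  (rs : seq U) : {set U} :=
  [set b in T | has (fun r => covers S r b) rs].

Definition gain (U : finType) (T : {set U}) (S : {set {set U}})
  (rs : seq U) (r : U) : nat :=
  #|[set b in T | covers S r b & b \notin covered T S rs]|.

Definition greedy_run (U : finType) (T : {set U}) (S : {set {set U}})
  (rs : seq U) : Prop :=
  [/\ forall (pre : seq U) (r : U) (post : seq U), rs = pre ++ r :: post ->
        [/\ covered T S pre != T,
            r \notin T &
            forall r', r' \notin T -> gain T S pre r' <= gain T S pre r]
    & covered T S rs = T].

From mathcomp Require Import all_boot all_order zify.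
Import Order.TTheory.

Set Implicit Arguments.
Unset Strict Implicit.
Unset Printing Implicit Defensive.

(** Let c_i be the number of blue features covered after i moves. If the
    (i+1)-st move gains g new blue features then, by maximality, each of the
    OPT_SC red features of an optimal cover would gain at most g; as these
    cover the n - c_i uncovered blue features, n - c_i <= OPT_SC * g. Thus
    g = 0 is impossible while something is uncovered, and g = 1 forces
    c_i >= n - OPT_SC >= 2K - 1. So for i < K every move either gains two
    features or starts from at least 2i + 1 covered ones, and c_i >= 2i
    follows by induction (if GREEDY stops early, all n >= 2K blue features
    are covered, as OPT_SC >= 1). *)

Lemma leq_card_bigcup (U I : finType) (P : pred I) (F : I -> {set U}) :
  #|\bigcup_(i | P i) F i| <= \sum_(i | P i) #|F i|.
Proof.
elim/big_rec2: _ => [|i n X _ leXn]; first by rewrite cards0.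
by rewrite (leq_trans (leq_card_setU _ _).1) ?leq_add2l.
Qed.

Section Covering.
Variables (U : finType) (T : {set U}) (S : {set {set U}}).

Lemma covered_subset rs : covered T S rs \subset T.
Proof. by apply/subsetP => b; rewrite inE => /andP[]. Qed.

Lemma card_covered_rcons pre r :
  #|covered T S (rcons pre r)| = #|covered T S pre| + gain T S pre r.
Proof.
rewrite /gain -(cardsID (covered T S pre) (covered T S (rcons pre r))).
congr (_ + _); apply: eq_card => b; rewrite !inE has_rcons.
  by case: (b \in T); case: (has _ pre); rewrite ?orbT ?andbF.
by case: (b \in T); case: (has _ pre); case: (covers S r b).
Qed.

Hypothesis oneR : one_red T S.

Lemma red_of_exemplar E : E \in S -> exists2 r, r \in E & r \notin T.
Proof.
move=> ES; have /eqP/cards1P[r Er] := oneR ES.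
by have := set11 r; rewrite -Er inE => /andP[]; exists r.
Qed.

Lemma uncovered_le_cost_gain (S' : {set {set U}}) pre g :
  S' \subset S -> T \subset cover S' ->
  (forall r, r \notin T -> gain T S pre r <= g) ->
  #|T| - #|covered T S pre| <= #|cover S' :\: T| * g.
Proof.
move=> subS' coverT gain_le.
pose G r := [set b in T | covers S r b & b \notin covered T S pre].
rewrite -(cardsDS (covered_subset pre)) -sum_nat_const.
apply: (@leq_trans (\sum_(r in cover S' :\: T) #|G r|)); last first.
  by apply: leq_sum => r; rewrite inE => /andP[rT _]; apply: gain_le.
apply: leq_trans _ (leq_card_bigcup _ G); apply: subset_leq_card.
apply/subsetP => b; rewrite inE => /andP[b_unc bT].
have /bigcupP[E ES' bE] := subsetP coverT b bT.
have ES := subsetP subS' E ES'.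
have [r rE rT] := red_of_exemplar ES.
apply/bigcupP; exists r; first by rewrite inE rT; apply/bigcupP; exists E.
by rewrite inE bT b_unc andbT; apply/existsP; exists E; rewrite ES rE bE.
Qed.

Hypothesis wf : tap_wf T S.

Lemma opt_sc_attained : exists2 S' : {set {set U}},
  S' \subset S & T \subset cover S' /\ #|cover S' :\: T| = opt_sc T S.
Proof.
case: wf => appear _ _.
have feasS : (S \in powerset S) && (T \subset cover S).
  rewrite inE subxx; apply/subsetP => u _.
  by have [E ES uE] := appear u; apply/bigcupP; exists E.
have [S' /andP[]] := eq_bigmin (x := #|U| : nat) S
   [pred S' | (S' \in powerset S) && (T \subset cover S')]
   (fun S' => #|cover S' :\: T|) feasS (fun S' _ => max_card _).
by rewrite powersetE => ? ? ?; exists S'.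
Qed.

Lemma opt_sc_gt0 : 0 < opt_sc T S.
Proof.
have [S' subS' [coverT <-]] := opt_sc_attained.
case: wf => _ /set0Pn[b bT] _.
have /bigcupP[E ES' bE] := subsetP coverT b bT.
have [r rE rT] := red_of_exemplar (subsetP subS' E ES').
by apply/card_gt0P; exists r; rewrite inE rT; apply/bigcupP; exists E.
Qed.

Lemma uncovered_le_opt_gain pre g :
  (forall r, r \notin T -> gain T S pre r <= g) ->
  #|T| - #|covered T S pre| <= opt_sc T S * g.
Proof.
have [S' subS' [coverT <-]] := opt_sc_attained.
exact: uncovered_le_cost_gain.
Qed.

End Covering.

Section Greedy.
Variables (U : finType) (T : {set U}) (S : {set {set U}}) (rs : seq U).
Hypotheses (wf : tap_wf T S) (oneR : one_red T S) (greedy : greedy_run T S rs).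

Lemma greedy_run_move i : i < size rs -> exists r,
  [/\ take i.+1 rs = rcons (take i rs) r, covered T S (take i rs) != T &
      forall r', r' \notin T -> gain T S (take i rs) r' <= gain T S (take i rs) r].
Proof.
move=> i_lt; case: greedy => move_ok _.
case Edrop: (drop i rs) => [|r post].
  by move/eqP: Edrop; rewrite -size_eq0 size_drop subn_eq0 leqNgt i_lt.
have Ers : rs = take i rs ++ r :: post by rewrite -Edrop cat_take_drop.
have [unc _ max_r] := move_ok _ _ _ Ers.
exists r; split=> //.
by rewrite {1}Ers -cat_rcons take_size_cat // size_rcons size_take i_lt.
Qed.

Lemma greedy_run_covered_double i :
  2 * i <= (#|T| - opt_sc T S).+1 -> 2 * i <= #|covered T S (take i rs)|.
Proof.
elim: i => [|i IH] i_le //.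
have IHi : 2 * i <= #|covered T S (take i rs)| by apply: IH; lia.
case: (ltnP i (size rs)) => [i_lt | i_ge].
  have [r [-> unc max_r]] := greedy_run_move i_lt.
  rewrite card_covered_rcons.
  have c_le := subset_leq_card (covered_subset T S (take i rs)).
  have unc_le := uncovered_le_opt_gain oneR wf max_r.
  set g := gain T S (take i rs) r in unc_le *.
  have g_gt0 : 0 < g.
    rewrite lt0n; apply: contra unc => /eqP g0.
    rewrite g0 muln0 in unc_le.
    by rewrite eqEcard covered_subset; lia.
  have [g_ge2 | g_lt2] := leqP 2 g; first lia.
  have g1 : g = 1 by lia.
  by rewrite g1 muln1 in unc_le; lia.
have opt_gt0 := opt_sc_gt0 oneR wf.
case: greedy => _ all_covered.
by rewrite take_oversize ?all_covered; lia.
Qed.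

End Greedy.

Theorem lemma14 (U : finType) (T : {set U}) (S : {set {set U}}) (rs : seq U) :
  tap_wf T S -> one_red T S -> greedy_run T S rs ->
  let n := #|T| in
  let K := (n - opt_sc T S).+1 %/ 2 in
  2 * K <= #|covered T S (take K rs)|.
Proof.
move=> wf oneR greedy /=.
apply: greedy_run_covered_double => //.
by rewrite mulnC leq_divM.
Qed.
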